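(* The class of probe $P_5$-free graphs is a proper subclass of the class of $(C_7,C_9,C_{11},\ldots)$-free graphs; that is, every probe $P_5$-free graph contains no induced odd cycle of length at least $7$, and there exists a graph containing no induced odd cycle of length at least $7$ that is not probe $P_5$-free.
   Context: All graphs are finite and simple. $C_n$ is the cycle on $n$ vertices and $P_5$ the path on $5$ vertices. A graph is $H$-free if it has no induced subgraph isomorphic to $H$; $(C_7,C_9,C_{11},\ldots)$-free means $C_{2\ell+1}$-free for all $\ell\geq 3$. A graph $G=(V,E)$ is probe $P_5$-free if there is an independent set $N$ of $G$ and a set $F\subseteq\binom{N}{2}$ such that $(V,E\cup F)$ is $P_5$-free. *)

From mathcomp Require Import all_boot.
Set Implicit Arguments. Unset Strict Implicit. Unset Printing Implicit Defensive.

Definition simple_graph (T : finType) (e : rel T) : Prop :=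
  (forall x y, e x y = e y x) /\ (forall x, ~~ e x x).

Definition cycle_rel (n : nat) : rel 'I_n :=
  fun i j => (j == (i.+1 %% n) :> nat) || (i == (j.+1 %% n) :> nat).

Definition path_rel (n : nat) : rel 'I_n :=
  fun i j => (j == i.+1 :> nat) || (i == j.+1 :> nat).

Definition induced_sub (U T : finType) (h : rel U) (e : rel T) : Prop :=
  exists f : U -> T, injective f /\ forall u v, e (f u) (f v) = h u v.

Definition H_free (U T : finType) (h : rel U) (e : rel T) : Prop :=
  ~ induced_sub h e.

Definition P5_free (T : finType) (e : rel T) : Prop :=
  H_free (@path_rel 5) e.

Definition long_odd_cycle_free (T : finType) (e : rel T) : Prop :=
  forall l : nat, 3 <= l -> H_free (@cycle_rel (2 * l + 1)) e.

(* Probe P5-free: there is an independent set N and a set F of pairs of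
   vertices of N such that (V, E u F) is P5-free. F is represented as a
   symmetric irreflexive relation contained in N x N. *)
Definition probe_P5_free (T : finType) (e : rel T) : Prop :=
  exists (N : {set T}) (F : rel T),
    (forall x y, x \in N -> y \in N -> ~~ e x y) /\
    (forall x y, F x y -> (x \in N) && (y \in N)) /\
    (forall x y, F x y = F y x) /\ (forall x, ~~ F x x) /\
    P5_free (fun x y => e x y || F x y).

(* Probe P5-freeness is hereditary, so it suffices that an odd cycle C of
   length at least 7 is not probe P5-free: since N is independent and C is odd,
   two consecutive vertices w4, w5 of C lie outside N; then among w1 ... w5 only
   w1 w3 can become a probe edge, and if it does, w5 w4 w3 w1 w0 is an induced P5.
   The separating graph is the hexagon 0 ... 5 plus a vertex 6 adjacent to 0
   and 1; it has 7 vertices and a triangle, hence no induced C7. Unless N is a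
   colour class of the hexagon, some P5 of the hexagon contains at most one
   vertex of N and survives; for the class {0, 2, 4} the paths 6-1-2-3-4,
   6-0-5-4-3 and 6-1-2-4-5 cover all choices of probe edges, and the other
   class is its mirror image. *)

From mathcomp Require Import all_boot zify.
Set Implicit Arguments. Unset Strict Implicit. Unset Printing Implicit Defensive.

Definition probe_completion (T : finType) (e F : rel T) : rel T :=
  fun x y => e x y || F x y.

Definition probe_P5_witness (T : finType) (e : rel T) (N : {set T}) (F : rel T) : Prop :=
  (forall x y, x \in N -> y \in N -> ~~ e x y) /\
  (forall x y, F x y -> (x \in N) && (y \in N)) /\
  (forall x y, F x y = F y x) /\ (forall x, ~~ F x x) /\
  P5_free (probe_completion e F).

Lemma path_rel5_nbhd_inj (u v : 'I_5) : path_rel u =1 path_rel v -> u = v.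
Proof.
move=> uv; apply: val_inj.
move: (uv (@Ordinal 5 0 isT)) (uv (@Ordinal 5 1 isT)) (uv (@Ordinal 5 2 isT))
  (uv (@Ordinal 5 3 isT)) (uv (@Ordinal 5 4 isT)) => {uv}.
by case: u v => [[|[|[|[|[|//]]]]] ?] [[|[|[|[|[|//]]]]] ?].
Qed.

Lemma induced_P5_of_embedding (T : finType) (g : rel T) (f : 'I_5 -> T) :
  (forall u v, g (f u) (f v) = path_rel u v) -> induced_sub (@path_rel 5) g.
Proof.
move=> fg; exists f; split=> // u v fuv.
by apply: path_rel5_nbhd_inj => w; rewrite -!fg fuv.
Qed.

Lemma induced_P5_of_path (T : finType) (g : rel T) (a b c d x : T) :
  simple_graph g -> [&& g a b, g b c, g c d & g d x] ->
  ~~ [|| g a c, g a d, g a x, g b d, g b x | g c x] ->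
  induced_sub (@path_rel 5) g.
Proof.
move=> [g_sym g_irr] /and4P[ab bc cd dx].
move=> /norP[/negbTE ac /norP[/negbTE ad /norP[/negbTE ax]]].
move=> /norP[/negbTE bd /norP[/negbTE bx /negbTE cx]].
apply: (@induced_P5_of_embedding _ _ (fun u => nth a [:: a; b; c; d; x] u)).
have gaa y : g y y = false by exact: negbTE.
by case=> [[|[|[|[|[|//]]]]] ?] [[|[|[|[|[|//]]]]] ?];
  rewrite /= ?gaa // g_sym ?ab ?bc ?cd ?dx ?ac ?ad ?ax ?bd ?bx ?cx.
Qed.

Lemma induced_sub_trans (U V T : finType) (h : rel U) (g : rel V) (e : rel T) :
  induced_sub h g -> induced_sub g e -> induced_sub h e.
Proof.
move=> [f [f_inj fg]] [f' [f'_inj f'e]].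
by exists (f' \o f); split=> [|u v]; [exact: inj_comp | rewrite /= f'e fg].
Qed.

Lemma probe_P5_witness_pullback (U T : finType) (h : rel U) (e : rel T) (f : U -> T)
    (N : {set T}) (F : rel T) :
  injective f -> (forall u v, e (f u) (f v) = h u v) -> probe_P5_witness e N F ->
  probe_P5_witness h (f @^-1: N) (fun u v => F (f u) (f v)).
Proof.
move=> f_inj fe [N_indep [F_sub [F_sym [F_irr P5f]]]].
split=> [u v|]; first by rewrite !inE -fe; exact: N_indep.
split=> [u v /F_sub|]; first by rewrite !inE.
do 2!split=> //; move=> P5; apply: P5f.
by apply: induced_sub_trans P5 _; exists f; split=> // u v; rewrite /probe_completion fe.
Qed.

Lemma probe_P5_free_induced (U T : finType) (h : rel U) (e : rel T) :
  induced_sub h e -> probe_P5_free e -> probe_P5_free h.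
Proof.
move=> [f [f_inj fe]] [N [F wit]].
by exists (f @^-1: N), (fun u v => F (f u) (f v)); exact: probe_P5_witness_pullback.
Qed.

Section ProbeCompletion.

Variables (T : finType) (e : rel T) (N : {set T}) (F : rel T).
Hypothesis F_sub : forall x y, F x y -> (x \in N) && (y \in N).

Lemma probe_edge_outl x y : x \notin N -> F x y = false.
Proof. by apply: contraNF => /F_sub/andP[]. Qed.

Lemma probe_edge_outr x y : y \notin N -> F x y = false.
Proof. by apply: contraNF => /F_sub/andP[]. Qed.

Hypothesis F_sym : forall x y, F x y = F y x.
Hypothesis F_irr : forall x, ~~ F x x.

Lemma simple_graph_probe_completion :
  simple_graph e -> simple_graph (probe_completion e F).
Proof.
move=> [e_sym e_irr]; split=> [x y|x]; rewrite /probe_completion.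
  by rewrite e_sym F_sym.
by rewrite negb_or e_irr F_irr.
Qed.

Lemma probe_completion_induced_P5 (f : 'I_5 -> T) :
  (forall u v, e (f u) (f v) = path_rel u v) ->
  (forall u v, u != v -> ~~ path_rel u v -> (f u \notin N) || (f v \notin N)) ->
  induced_sub (@path_rel 5) (probe_completion e F).
Proof.
move=> fe no_chord; apply: (induced_P5_of_embedding (f := f)) => u v.
rewrite /probe_completion fe.
have [<-|uv] := eqVneq u v; first by rewrite (negbTE (F_irr _)) orbF.
case: (boolP (path_rel u v)) => //= uv_nonadj.
by case/orP: (no_chord u v uv uv_nonadj) => [/probe_edge_outl|/probe_edge_outr] ->.
Qed.

End ProbeCompletion.

Lemma odd_cycle_consecutive_false (p : nat -> bool) (k : nat) :
  odd k -> p k = p 0 -> (forall i, ~~ (p i && p i.+1)) ->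
  exists i, ~~ p i && ~~ p i.+1.
Proof.
move=> k_odd pk p_indep.
have [/hasP[i _ ?]|/hasPn alt] := boolP (has (fun i => ~~ p i && ~~ p i.+1) (iota 0 k)).
  by exists i.
have p_alt n : n <= k -> p n = p 0 (+) odd n.
  elim: n => [|n IHn] n_lt; first by rewrite addbF.
  have := alt n; rewrite mem_iota add0n n_lt => /(_ isT).
  have := p_indep n; rewrite /= IHn 1?ltnW // addbN.
  by case: (p n.+1); case: (p 0 (+) odd n).
by move: pk; rewrite p_alt // k_odd addbT; case: (p 0).
Qed.

Section OddCycle.

Variable k : nat.
Hypothesis k_ge7 : 7 <= k.

Let k_gt0 : 0 < k. Proof. exact: leq_trans k_ge7. Qed.
Let vertex (i : nat) : 'I_k := Ordinal (ltn_pmod i k_gt0).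

Let vertex_mod i j : i = j %[mod k] -> vertex i = vertex j.
Proof. by move=> ij; apply: val_inj. Qed.

Let cycle_rel_vertex i j :
  cycle_rel (vertex i) (vertex j) = (j == i.+1 %[mod k]) || (i == j.+1 %[mod k]).
Proof.
have modS m : (m %% k).+1 %% k = m.+1 %% k by rewrite -addn1 modnDml addn1.
by rewrite /cycle_rel /= !modS.
Qed.

Let cycle_rel_window i s t : s <= 5 -> t <= 5 ->
  cycle_rel (vertex (i + s)) (vertex (i + t)) = (t == s.+1) || (s == t.+1).
Proof. by move=> s5 t5; rewrite cycle_rel_vertex -!addnS !eqn_modDl !modn_small //; lia. Qed.

Lemma simple_graph_cycle_rel : simple_graph (@cycle_rel k).
Proof.
split=> [i j|i]; first by rewrite /cycle_rel orbC.
rewrite /cycle_rel orbb; have := ltn_ord i.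
by case: (ltngtP i.+1 k) => [/modn_small->|_|ik]; rewrite ?ik ?modnn; lia.
Qed.

Hypothesis k_odd : odd k.

Lemma odd_cycle_not_probe_P5_free : ~ probe_P5_free (@cycle_rel k).
Proof.
move=> [N [F [N_indep [F_sub [F_sym [F_irr P5f]]]]]]; apply: P5f.
have [i /andP[out4]] : exists i, (vertex (i + 4) \notin N) && (vertex (i.+1 + 4) \notin N).
  apply: (odd_cycle_consecutive_false (p := fun n => vertex (n + 4) \in N) k_odd).
    by rewrite (@vertex_mod (k + 4) 4) // -modnDml modnn.
  move=> n; apply/negP => /andP[nN n1N]; have := N_indep _ _ nN n1N.
  by rewrite cycle_rel_vertex addSn eqxx.
rewrite addSn -addnS => out5.
pose w s := vertex (i + s).
have w_adj s t : s <= 5 -> t <= 5 -> cycle_rel (w s) (w t) = (t == s.+1) || (s == t.+1).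
  exact: cycle_rel_window.
have sg := simple_graph_probe_completion F_sym F_irr simple_graph_cycle_rel.
have Fout4 y : F (w 4) y = false by apply: probe_edge_outl F_sub _ _ out4.
have Fout5 y : F (w 5) y = false by apply: probe_edge_outl F_sub _ _ out5.
have F31 : F (w 3) (w 1) = F (w 1) (w 3) := F_sym _ _.
case F13 : (F (w 1) (w 3)); last first.
  apply: (induced_P5_of_path sg (a := w 5) (b := w 4) (c := w 3) (d := w 2) (x := w 1)).
    by rewrite /probe_completion !w_adj.
  by rewrite /probe_completion !w_adj //= !Fout4 !Fout5 F31 F13.
have out0 : w 0 \notin N.
  apply/negP => w0N; have /andP[w1N _] := F_sub _ _ F13.
  by have := N_indep _ _ w0N w1N; rewrite w_adj.
have Fout0 y : F y (w 0) = false by apply: probe_edge_outr F_sub _ _ out0.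
apply: (induced_P5_of_path sg (a := w 5) (b := w 4) (c := w 3) (d := w 1) (x := w 0)).
  by rewrite /probe_completion !w_adj //= F31 F13.
by rewrite /probe_completion !w_adj //= !Fout4 !Fout5 Fout0.
Qed.

End OddCycle.

Lemma probe_P5_free_long_odd_cycle_free (T : finType) (e : rel T) :
  probe_P5_free e -> long_odd_cycle_free e.
Proof.
move=> e_probe l l_ge3 C_e.
have k_ge7 : 7 <= 2 * l + 1 by lia.
have k_odd : odd (2 * l + 1) by rewrite oddD oddM.
exact: odd_cycle_not_probe_P5_free k_ge7 k_odd (probe_P5_free_induced C_e e_probe).
Qed.

Definition hexagon_adj (a b : nat) : bool := (b == a.+1 %% 6) || (a == b.+1 %% 6).

Definition capped_hexagon_adj (a b : nat) : bool :=
  if (a < 6) && (b < 6) then hexagon_adj a b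
  else ((a == 6) && (b < 2)) || ((b == 6) && (a < 2)).

Definition capped_hexagon : rel 'I_7 := fun x y => capped_hexagon_adj x y.

Definition hexagon_path (k : nat) (u : 'I_5) : 'I_7 :=
  @Ordinal 7 _ (ltnW (ltn_pmod (k + u.+1) (isT : 0 < 6))).

Definition hexagon_colour (c : bool) (x : 'I_7) : bool := (x < 6) && (odd x == c).

Definition hexagon_flip (x : 'I_7) : 'I_7 :=
  if x < 6 then @Ordinal 7 _ (ltnW (ltn_pmod (7 - x) (isT : 0 < 6))) else x.

Local Notation vtx n := (@Ordinal 7 n isT).

Lemma simple_graph_capped_hexagon : simple_graph capped_hexagon.
Proof.
split=> [x y|x]; rewrite /capped_hexagon /capped_hexagon_adj /hexagon_adj.
  by rewrite andbC; case: ifP => _; rewrite orbC.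
by case: x => [[|[|[|[|[|[|[|//]]]]]]] ?].
Qed.

Lemma cycle_rel7_triangle_free (a b c : 'I_7) :
  ~~ [&& cycle_rel a b, cycle_rel b c & cycle_rel c a].
Proof.
by case: a b c => [[|[|[|[|[|[|[|//]]]]]]] ?] [[|[|[|[|[|[|[|//]]]]]]] ?] [[|[|[|[|[|[|[|//]]]]]]] ?].
Qed.

Lemma capped_hexagon_long_odd_cycle_free : long_odd_cycle_free capped_hexagon.
Proof.
move=> l l_ge3 [f [f_inj f_ind]].
have l3 : l = 3 by have := leq_card f f_inj; rewrite !card_ord; lia.
subst l; have [g fK gK] := injF_bij f_inj.
have := cycle_rel7_triangle_free (g (vtx 0)) (g (vtx 1)) (g (vtx 6)).
by rewrite -!f_ind !gK.
Qed.

Lemma capped_hexagon_path k (u v : 'I_5) :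
  capped_hexagon (hexagon_path k u) (hexagon_path k v) = path_rel u v.
Proof.
rewrite /capped_hexagon /= -!(modnDml k); move: (k %% 6) (ltn_pmod k (isT : 0 < 6)).
by case=> [|[|[|[|[|[|//]]]]]] _; case: u v => [[|[|[|[|[|//]]]]] ?] [[|[|[|[|[|//]]]]] ?].
Qed.

Lemma hexagon_flipK : involutive hexagon_flip.
Proof. by case=> [[|[|[|[|[|[|[|//]]]]]]] ?]; apply: val_inj. Qed.

Lemma capped_hexagon_flip x y :
  capped_hexagon (hexagon_flip x) (hexagon_flip y) = capped_hexagon x y.
Proof. by case: x y => [[|[|[|[|[|[|[|//]]]]]]] ?] [[|[|[|[|[|[|[|//]]]]]]] ?]. Qed.

Lemma hexagon_colour_flip x : hexagon_colour true (hexagon_flip x) = hexagon_colour false x.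
Proof. by case: x => [[|[|[|[|[|[|[|//]]]]]]] ?]. Qed.

(* [bs] lists the membership bits of the vertices 0 ... 6 in some N : the check
   says that N is not independent, or is a colour class of the hexagon, or meets
   some hexagon path [hexagon_path k] in no pair of non-consecutive vertices. *)
Definition capped_hexagon_set_check (bs : seq bool) : bool :=
  let m i := nth false bs i in
  [|| has (fun a => has (fun b => [&& m a, m b & capped_hexagon_adj a b]) (iota 0 7)) (iota 0 7),
      has (fun c => all (fun i => m i == (i < 6) && (odd i == c)) (iota 0 7)) [:: false; true] |
      has (fun k => all (fun u => all (fun v =>
             [&& u != v, (v != u.+1) && (u != v.+1) & m ((k + u.+1) %% 6)] ==>
             ~~ m ((k + v.+1) %% 6)) (iota 0 5)) (iota 0 5)) (iota 0 6)].

Lemma capped_hexagon_set_check_all b0 b1 b2 b3 b4 b5 b6 :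
  capped_hexagon_set_check [:: b0; b1; b2; b3; b4; b5; b6].
Proof. by case: b0; case: b1; case: b2; case: b3; case: b4; case: b5; case: b6; vm_compute. Qed.

Lemma capped_hexagon_probe_sets (N : {set 'I_7}) :
  (forall x y, x \in N -> y \in N -> ~~ capped_hexagon x y) ->
  (exists c, forall x, (x \in N) = hexagon_colour c x) \/
  (exists k, forall u v, u != v -> ~~ path_rel u v ->
     (hexagon_path k u \notin N) || (hexagon_path k v \notin N)).
Proof.
move=> N_indep; pose bs := [seq inord i \in N | i <- iota 0 7].
have memE i : i < 7 -> nth false bs i = (inord i \in N).
  by move=> i_lt; rewrite (nth_map 0) ?size_iota ?nth_iota.
have memE' (x : 'I_7) : (x \in N) = nth false bs x by rewrite memE // inord_val.
have : capped_hexagon_set_check bs := capped_hexagon_set_check_all _ _ _ _ _ _ _.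
case/or3P.
- case/hasP=> a; rewrite mem_iota => a_lt /hasP[b]; rewrite mem_iota => b_lt.
  rewrite !memE // => /and3P[aN bN ab].
  by have := N_indep _ _ aN bN; rewrite /capped_hexagon !inordK ?ab.
- case/hasP=> c _ /allP col; left; exists c => x.
  by rewrite memE'; apply/eqP/col; rewrite mem_iota /=.
- case/hasP=> k _ /allP chordless; right; exists k => u v uv.
  rewrite negb_or => uv_nonadj.
  have pathE w : (hexagon_path k w \in N) = nth false bs ((k + w.+1) %% 6) := memE' _.
  have := chordless u; rewrite mem_iota ltn_ord => /(_ isT) /allP /(_ v).
  rewrite mem_iota ltn_ord -!pathE uv uv_nonadj => /(_ isT) /implyP.
  by case: (hexagon_path k u \in N) => // /(_ isT).
Qed.

Lemma capped_hexagon_even_probe_P5 (N : {set 'I_7}) (F : rel 'I_7) :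
  (forall x, (x \in N) = hexagon_colour false x) ->
  (forall x y, F x y -> (x \in N) && (y \in N)) ->
  (forall x y, F x y = F y x) -> (forall x, ~~ F x x) ->
  induced_sub (@path_rel 5) (probe_completion capped_hexagon F).
Proof.
move=> N_even F_sub F_sym F_irr.
have sg := simple_graph_probe_completion F_sym F_irr simple_graph_capped_hexagon.
have Fout x y : ~~ (hexagon_colour false x && hexagon_colour false y) -> F x y = false.
  by apply: contraNF => /F_sub; rewrite !N_even.
case F24 : (F (vtx 2) (vtx 4)); last first.
  apply: (induced_P5_of_path sg (a := vtx 6) (b := vtx 1) (c := vtx 2) (d := vtx 3) (x := vtx 4)) => //.
  by rewrite /probe_completion /= F24 !Fout.
case F04 : (F (vtx 0) (vtx 4)); last first.
  apply: (induced_P5_of_path sg (a := vtx 6) (b := vtx 0) (c := vtx 5) (d := vtx 4) (x := vtx 3)) => //.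
  by rewrite /probe_completion /= F04 !Fout.
apply: (induced_P5_of_path sg (a := vtx 6) (b := vtx 1) (c := vtx 2) (d := vtx 4) (x := vtx 5)).
  by rewrite /probe_completion /= F24.
by rewrite /probe_completion /= !Fout.
Qed.

Lemma capped_hexagon_not_probe_P5_free : ~ probe_P5_free capped_hexagon.
Proof.
move=> [N [F wit]]; have [N_indep [F_sub [F_sym [F_irr P5f]]]] := wit.
case: (capped_hexagon_probe_sets N_indep) => [[[] N_col]|[k chordless]].
- have := probe_P5_witness_pullback (can_inj hexagon_flipK) capped_hexagon_flip wit.
  move=> [_ [F'_sub [F'_sym [F'_irr P5f']]]]; apply: P5f'.
  by apply: capped_hexagon_even_probe_P5 F'_sub F'_sym F'_irr => x; rewrite inE N_col hexagon_colour_flip.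
- exact: P5f (capped_hexagon_even_probe_P5 N_col F_sub F_sym F_irr).
- apply: P5f; apply: (probe_completion_induced_P5 F_sub F_irr (f := hexagon_path k)) => //.
  exact: capped_hexagon_path.
Qed.

Theorem mainTheorem10 :
  (forall (T : finType) (e : rel T), simple_graph e ->
     probe_P5_free e -> long_odd_cycle_free e) /\
  (exists (T : finType) (e : rel T),
     simple_graph e /\ long_odd_cycle_free e /\ ~ probe_P5_free e).
Proof.
split=> [T e _|]; first exact: probe_P5_free_long_odd_cycle_free.
exists 'I_7, capped_hexagon; split; first exact: simple_graph_capped_hexagon.
split; [exact: capped_hexagon_long_odd_cycle_free | exact: capped_hexagon_not_probe_P5_free].
Qed.
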